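(* For a composition $I$, let $\mathcal C_I=\sum_{\sigma:\ \mathrm{SC}(\sigma)=I}\mathbf G_\sigma\in\mathbf{FQSym}$ (with $\mathcal C_{\emptyset}=\mathbf G_{\emptyset}=1$). Then the elements $\mathcal C_I$ span a sub-coalgebra of $\mathbf{FQSym}$; more precisely, for every composition $I$ there are nonnegative integers $a_I^{JK}$ such that $$\Delta\,\mathcal C_I=\sum_{J,K}a_I^{JK}\,\mathcal C_J\otimes\mathcal C_K,$$ the sum running over pairs of (possibly empty) compositions $J,K$.
   Context: Permutations are viewed as words. A word $a_1\cdots a_m$ is initially dominated if $a_1>a_j$ for all $j\ge2$; every permutation $\sigma$ factors uniquely as $\sigma=u_1\cdots u_r$ into initially dominated words with increasing first letters, and its saillance composition is $\mathrm{SC}(\sigma)=(|u_1|,\ldots,|u_r|)$. $\mathbf{FQSym}$ is the Hopf algebra of free quasi-symmetric functions (over $\mathbb Q$), with basis $\mathbf G_\sigma$, $\sigma$ ranging over all permutations of all sizes $n\ge0$, and coproduct $\Delta\mathbf G_\sigma=\sum_{k=0}^{n}\mathbf G_{\sigma|_{[1,k]}}\otimes\mathbf G_{\mathrm{std}(\sigma|_{[k+1,n]})}$ for $\sigma\in\mathfrak S_n$, where $\sigma|_{[a,b]}$ is the subword of $\sigma$ formed by the letters in $[a,b]$ and $\mathrm{std}$ denotes standardization. *)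

From mathcomp Require Import all_boot all_order all_algebra.
Set Implicit Arguments. Unset Strict Implicit. Unset Printing Implicit Defensive.
Import GRing.Theory Num.Theory.

Definition is_permw (w : seq nat) : bool := perm_eq w (iota 1 (size w)).

Definition is_composition (I : seq nat) : bool := all (fun i => 0 < i) I.

Definition init_dominated (u : seq nat) : bool :=
  if u is a :: t then all (fun x => x < a) t else false.

Definition is_saillance_fact (u : seq (seq nat)) (s : seq nat) : bool :=
  [&& flatten u == s, all init_dominated u &
      sorted ltn [seq head 0 x | x <- u]].

(* Computation of the saillance composition: the greedy scan which starts a
   new factor exactly when the next letter exceeds the first letter of the
   current factor.  [m] is the first letter of the current factor and [cur]
   its length so far. *)
Fixpoint sc_aux (m cur : nat) (s : seq nat) : seq nat :=
  match s with
  | [::] => [:: cur]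
  | x :: t => if m < x then cur :: sc_aux x 1 t else sc_aux m cur.+1 t
  end.

Definition SC (s : seq nat) : seq nat :=
  if s is x :: t then sc_aux x 1 t else [::].

Definition restrict (s : seq nat) (a b : nat) : seq nat :=
  [seq x <- s | (a <= x) && (x <= b)].

Definition std (w : seq nat) : seq nat :=
  [seq (count (fun y => y < x) w).+1 | x <- w].

(* An element of FQSym (coefficients in Q) is given by its coefficient
   function on the basis G_sigma; an element of FQSym (x) FQSym by its
   coefficient function on the basis G_alpha (x) G_beta. *)

(* Coefficients of Delta G_sigma, sigma in S_n:
   Delta G_sigma = sum_{k=0}^n G_{sigma|[1,k]} (x) G_{std(sigma|[k+1,n])}. *)
Definition DeltaG (s : seq nat) (al be : seq nat) : rat :=
  \sum_(k < (size s).+1)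
     ((al == restrict s 1 k) && (be == std (restrict s k.+1 (size s))))%:R.

Definition Cc (I : seq nat) (s : seq nat) : rat :=
  (is_permw s && (SC s == I))%:R.

(* Delta C_I, computed by linearity: all sigma with SC(sigma) = I lie in
   S_n with n = |I| = sumn I. *)
Definition DeltaC (I : seq nat) (al be : seq nat) : rat :=
  \sum_(s <- permutations (iota 1 (sumn I))) Cc I s * DeltaG s al be.

(* The coefficient of G_al (x) G_be in Delta C_I counts the permutations s of
   size |I| with SC(s) = I whose letters <= k = |al| spell al and whose other
   letters spell be shifted by k; such an s is the interleaving of al and be+k
   along the mask marking its large letters.  The saillance composition of a
   word is determined by its records (left-to-right maxima), and the records of
   such an interleaving depend only on the mask and on the records of al and
   be: up to the first large letter they are those of al, afterwards those of
   be.  So exchanging (al, be) for another pair with the same saillance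
   compositions, keeping the mask, is an injection between the two sets of
   permutations; the coefficient thus depends only on (SC al, SC be), and that
   common value is a_I^{JK}. *)

From mathcomp Require Import all_boot all_order all_algebra.
Import GRing.Theory Num.Theory.
Set Implicit Arguments. Unset Strict Implicit. Unset Printing Implicit Defensive.

Fixpoint records (M : nat) (s : seq nat) : bitseq :=
  if s is x :: t then (M < x) :: records (maxn M x) t else [::].

Lemma records_shift k M v : records (k + M) (map (addn k) v) = records M v.
Proof. by elim: v M => //= x v IH M; rewrite ltn_add2l -addn_maxr IH. Qed.

Lemma sc_aux_records m m' c t t' :
  records m t = records m' t' -> sc_aux m c t = sc_aux m' c t'.
Proof.
elim: t t' m m' c => [|x t IH] [|x' t'] m m' c //= [lt_eq].
rewrite /maxn -lt_eq; case: ifP => _ /IH ->; by rewrite ?lt_eq.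
Qed.

Lemma SC_eq_of_records s s' : all (fun x => 0 < x) s -> all (fun x => 0 < x) s' ->
  records 0 s = records 0 s' -> SC s = SC s'.
Proof.
case: s => [|x t]; case: s' => [|x' t'] //= /andP[x_gt0 _] /andP[x'_gt0 _].
by rewrite !max0n x_gt0 x'_gt0 => -[/sc_aux_records ->].
Qed.

Lemma sumn_SC s : sumn (SC s) = size s.
Proof.
case: s => //= x t.
suff sumn_sc_aux m c : sumn (sc_aux m c t) = c + size t by rewrite sumn_sc_aux add1n.
elim: t m c => [|y t IH] m c /=; first by rewrite !addn0.
by case: ifP => _; rewrite /= IH ?add1n ?addSnnS.
Qed.

Lemma SC_composition s : is_composition (SC s).
Proof.
case: s => //= x t; rewrite /is_composition.
suff sc_pos c m : 0 < c -> all (fun i => 0 < i) (sc_aux m c t) by exact: sc_pos.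
elim: t m c => [|y t IH] m c c_pos /=; first by rewrite c_pos.
by case: ifP => _; rewrite /= ?c_pos IH.
Qed.

Definition block_starts (I : seq nat) : bitseq :=
  flatten [seq true :: nseq i.-1 false | i <- I].

Lemma records_sc_aux m c t : 0 < c ->
  true :: nseq c.-1 false ++ records m t = block_starts (sc_aux m c t).
Proof.
elim: t m c => [|x t IH] m c c_gt0 /=; first by rewrite cats0 /block_starts /= cats0.
rewrite /maxn; case: ifP => _; last first.
  rewrite -IH //; case: c c_gt0 => // c _ /=.
  by congr (_ :: _); elim: c => //= c ->.
by rewrite /block_starts /= -/(block_starts _) -IH.
Qed.

Lemma records_SC s : all (fun x => 0 < x) s -> records 0 s = block_starts (SC s).
Proof.
by case: s => //= x t /andP[x_gt0 _]; rewrite x_gt0 max0n -records_sc_aux.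
Qed.

Fixpoint interleave (m : bitseq) (u v : seq nat) : seq nat :=
  if m is b :: m' then
    if b then head 0 v :: interleave m' u (behead v)
    else head 0 u :: interleave m' (behead u) v
  else [::].

Definition high_mask (k : nat) (s : seq nat) : bitseq := [seq k < x | x <- s].

Lemma interleave_high_mask k s :
  interleave (high_mask k s) [seq x <- s | x <= k] [seq x <- s | k < x] = s.
Proof.
rewrite /high_mask; elim: s => // x s IH /=.
by case: leqP => _ /=; rewrite IH.
Qed.

Lemma interleave_split m k u v :
  all (fun x => x <= k) u -> all (fun x => k < x) v ->
  count negb m = size u -> count id m = size v ->
  let w := interleave m u v in
  [/\ high_mask k w = m, [seq x <- w | x <= k] = u & [seq x <- w | k < x] = v].
Proof.
elim: m u v => [|[] m IH] u v u_le v_gt /=.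
- by case: u u_le; case: v v_gt.
- case: v v_gt => [|y v] //= /andP[y_gt v_gt] u_cnt [v_cnt].
  by have [-> -> ->] := IH _ _ u_le v_gt u_cnt v_cnt; rewrite y_gt leqNgt y_gt.
- case: u u_le => [|x u] //= /andP[x_le u_le] [u_cnt] v_cnt.
  by have [-> -> ->] := IH _ _ u_le v_gt u_cnt v_cnt; rewrite x_le ltnNge x_le.
Qed.

Lemma perm_interleave m u v : count negb m = size u -> count id m = size v ->
  perm_eq (interleave m u v) (u ++ v).
Proof.
elim: m u v => [|[] m IH] u v /=; first by case: u; case: v.
- case: v => [|y v] //= u_cnt [/(IH _ _ u_cnt) perm_w].
  by rewrite perm_sym -[y :: v]cat1s perm_catCA perm_cons perm_sym.
- by case: u => [|x u] //= [/IH perm_w] /perm_w; rewrite perm_cons.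
Qed.

(* Once a letter of [v] has occurred, no letter of [u] can be a record. *)
Fixpoint merge_records (m bu bv : bitseq) : bitseq :=
  if m is b :: m' then
    if b then head false bv :: merge_records m' [::] (behead bv)
    else head false bu :: merge_records m' (behead bu) bv
  else [::].

Lemma records_interleave_dominated m M u v : all (fun x => x <= M) u ->
  records M (interleave m u v) = merge_records m [::] (records M v).
Proof.
elim: m M u v => [|[] m IH] M u v u_le //=.
- case: v => [|y v] /=; rewrite IH //.
  by apply: sub_all u_le => x /leq_trans; apply; rewrite leq_maxl.
- case: u u_le => [|x u] /= => [_|/andP[x_le u_le]]; first by rewrite /maxn ltn0 IH.
  by rewrite /maxn ltnNge x_le IH.
Qed.

Lemma records_interleave m M k u v :
  M <= k -> all (fun x => x <= k) u -> all (fun x => k < x) v ->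
  count id m = size v ->
  records M (interleave m u v) = merge_records m (records M u) (records k v).
Proof.
elim: m M u v => [|[] m IH] M u v M_le u_le v_gt //=.
- case: v v_gt => [|y v] //= /andP[y_gt v_gt] _.
  rewrite y_gt (leq_ltn_trans M_le y_gt) /maxn y_gt (leq_ltn_trans M_le y_gt).
  rewrite records_interleave_dominated //.
  by apply: sub_all u_le => x /leq_trans; apply; apply: ltnW.
- move=> v_cnt; case: u u_le => [|x u] /= => [_|/andP[x_le u_le]].
    by rewrite ltn0 /maxn ltn0 IH.
  by rewrite IH // geq_max M_le.
Qed.

Lemma perm_iota1_pos s N : perm_eq s (iota 1 N) -> all (fun x => 0 < x) s.
Proof. by move=> s_perm; apply/allP => x; rewrite (perm_mem s_perm) mem_iota => /andP[]. Qed.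

Lemma permw_le_size w : is_permw w -> all (fun x => x <= size w) w.
Proof.
by move=> w_perm; apply/allP => x; rewrite (perm_mem w_perm) mem_iota add1n ltnS => /andP[].
Qed.

Lemma permw_perm_eq u v : is_permw u -> is_permw v -> size u = size v -> perm_eq u v.
Proof. by move=> u_perm v_perm eq_size; rewrite (permPl u_perm) eq_size perm_sym. Qed.

Lemma perm_iota_low s N k : k <= N -> perm_eq s (iota 1 N) ->
  perm_eq [seq x <- s | x <= k] (iota 1 k).
Proof.
move=> k_le s_perm; rewrite -(filter_iota_ltn 1 k_le).
rewrite (eq_filter (a2 := fun x => x < 1 + k)); first exact: perm_filter.
by move=> x; rewrite add1n ltnS.
Qed.

Lemma perm_iota_high s N k : k <= N -> perm_eq s (iota 1 N) ->
  perm_eq [seq x <- s | k < x] (map (addn k) (iota 1 (N - k))).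
Proof.
move=> k_le s_perm; apply: perm_trans (perm_filter _ s_perm) _.
rewrite -{1}(subnKC k_le) iotaD filter_cat -iotaDl addnC.
rewrite (eq_in_filter (a2 := pred0)) ?filter_pred0; last first.
  by move=> x; rewrite mem_iota add1n ltnS => /andP[_ x_le]; rewrite ltnNge x_le.
rewrite (eq_in_filter (a2 := predT)) ?filter_predT //.
by move=> x; rewrite mem_iota addn1 => /andP[].
Qed.

Lemma std_permw v : is_permw v -> std v = v.
Proof.
move=> v_perm; apply: map_id_in => x x_in.
have := x_in; rewrite (perm_mem v_perm) mem_iota add1n => /andP[x_gt0 x_le].
rewrite (permP v_perm) -size_filter (eq_filter (a2 := fun y => y < 1 + x.-1)).
  by rewrite filter_iota_ltn ?size_iota ?prednK //; apply: leq_trans (leq_pred x) _.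
by move=> y; rewrite add1n prednK.
Qed.

Lemma std_shift k v : std (map (addn k) v) = std v.
Proof.
rewrite /std -map_comp; apply: eq_map => x /=.
by rewrite count_map; congr _.+1; apply: eq_count => y /=; rewrite ltn_add2l.
Qed.

Lemma std_high s N k : k <= N -> perm_eq s (iota 1 N) ->
  std [seq x <- s | k < x] = [seq x - k | x <- [seq x <- s | k < x]].
Proof.
move=> k_le s_perm; set w := filter _ s.
have w_shift : w = map (addn k) [seq x - k | x <- w].
  rewrite -map_comp map_id_in // => x; rewrite mem_filter => /andP[x_gt _] /=.
  by rewrite subnKC // ltnW.
have w_perm := perm_iota_high k_le s_perm.
rewrite -/w {1}w_shift in w_perm; have v_perm := perm_map_inj (@addnI k) w_perm.
rewrite {1}w_shift std_shift std_permw // /is_permw (perm_size v_perm) size_iota.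
exact: v_perm.
Qed.

Lemma size_filter_le_perm (p : pred nat) s N :
  perm_eq s (iota 1 N) -> size (filter p s) <= N.
Proof. by move=> s_perm; rewrite size_filter -(size_iota 1 N) -(perm_size s_perm) count_size. Qed.

Definition cut_at (N k : nat) (s al be : seq nat) : bool :=
  (al == restrict s 1 k) && (be == std (restrict s k.+1 N)).

Definition split_at (k : nat) (s u v : seq nat) : bool :=
  (u == [seq x <- s | x <= k]) && (map (addn k) v == [seq x <- s | k < x]).

Lemma restrict_low s N k : perm_eq s (iota 1 N) -> restrict s 1 k = [seq x <- s | x <= k].
Proof.
move=> s_perm; apply: eq_in_filter => x.
by rewrite (perm_mem s_perm) mem_iota => /andP[->].
Qed.

Lemma restrict_high s N k : perm_eq s (iota 1 N) -> restrict s k.+1 N = [seq x <- s | k < x].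
Proof.
move=> s_perm; apply: eq_in_filter => x.
by rewrite (perm_mem s_perm) mem_iota add1n ltnS => /andP[_ ->]; rewrite andbT.
Qed.

Lemma cut_atE N s al be : perm_eq s (iota 1 N) ->
  cut_at N (size al) s al be = split_at (size al) s al be.
Proof.
move=> s_perm; rewrite /cut_at /split_at (restrict_low _ s_perm) (restrict_high _ s_perm).
case: eqP => //= al_eq.
have k_le : size al <= N by rewrite {1}al_eq (size_filter_le_perm _ s_perm).
have high_shift : map (addn (size al)) (std [seq x <- s | size al < x]) =
                  [seq x <- s | size al < x].
  rewrite (std_high k_le s_perm) -map_comp map_id_in // => x.
  by rewrite mem_filter => /andP[x_gt _] /=; rewrite subnKC // ltnW.
by rewrite -{2}high_shift (inj_eq (inj_map (@addnI _))).
Qed.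

Lemma DeltaG_perm N s al be : perm_eq s (iota 1 N) ->
  DeltaG s al be = (cut_at N (size al) s al be)%:R%R.
Proof.
move=> s_perm; have size_s : size s = N by rewrite (perm_size s_perm) size_iota.
have cut_size k : k <= N -> cut_at N k s al be -> size al = k.
  move=> k_le /andP[/eqP al_eq _]; rewrite al_eq (restrict_low _ s_perm).
  by rewrite (perm_size (perm_iota_low k_le s_perm)) size_iota.
rewrite /DeltaG size_s (eq_bigr (fun k : 'I_N.+1 =>
  if k == size al :> nat then (cut_at N (size al) s al be)%:R%R else 0%R)).
  rewrite -big_mkcond (big_ord1_eq _ (fun=> _)) ltnS; case: leqP => // N_lt.
  rewrite cut_atE //; case: (boolP (split_at _ _ _ _)) => // /andP[/eqP al_eq _].
  by have := size_filter_le_perm (fun x => x <= size al) s_perm; rewrite -al_eq leqNgt N_lt.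
move=> k _; rewrite -/(cut_at N k s al be).
have [<- //|k_ne] := eqVneq (k : nat) (size al).
case cut_k: (cut_at N k s al be) => //.
by rewrite (cut_size k (ltn_ord k) cut_k) eqxx in k_ne.
Qed.

Definition DeltaC_coef (I al be : seq nat) : nat :=
  count (fun s => (SC s == I) && cut_at (sumn I) (size al) s al be)
        (permutations (iota 1 (sumn I))).

Lemma DeltaCE I al be : DeltaC I al be = (DeltaC_coef I al be)%:R%R.
Proof.
rewrite /DeltaC /DeltaC_coef -sum1_count natr_sum [RHS]big_mkcond /=.
apply: eq_big_seq => s; rewrite mem_permutations => s_perm.
rewrite /Cc (DeltaG_perm _ _ s_perm) /is_permw (perm_size s_perm) size_iota s_perm /=.
by case: (SC s == I); case: cut_at; rewrite ?mul1r ?mul0r.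
Qed.

Lemma DeltaC_coef_support I al be : DeltaC_coef I al be != 0 ->
  [&& is_permw al, is_permw be, size al <= sumn I & size be <= sumn I].
Proof.
set N := sumn I; rewrite -lt0n -has_count => /hasP[s]; rewrite mem_permutations => s_perm.
rewrite cut_atE // => /and3P[_ /eqP al_eq /eqP be_eq].
have k_le : size al <= N by rewrite {1}al_eq (size_filter_le_perm _ s_perm).
have be_perm : perm_eq be (iota 1 (N - size al)).
  by apply: (perm_map_inj (@addnI (size al))); rewrite be_eq (perm_iota_high k_le s_perm).
rewrite /is_permw (perm_size be_perm) size_iota be_perm leq_subr k_le andbT /=.
by rewrite {1}al_eq (perm_iota_low k_le s_perm).
Qed.

Lemma count_leq_inj_in (T : eqType) (r : seq T) (P Q : pred T) (f : T -> T) :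
  uniq r -> {in filter P r &, injective f} ->
  {in filter P r, forall x, f x \in filter Q r} -> count P r <= count Q r.
Proof.
move=> r_uniq f_inj f_in; rewrite -!size_filter -(size_map f).
apply: uniq_leq_size => [|_ /mapP[x x_in ->]]; last exact: f_in.
by rewrite map_inj_in_uniq ?filter_uniq.
Qed.

Lemma all_shift_gt k v : all (fun x => 0 < x) v -> all (fun x => k < x) (map (addn k) v).
Proof.
by move=> v_pos; rewrite all_map; apply: sub_all v_pos => x /=; rewrite -{1}(addn0 k) ltn_add2l.
Qed.

Lemma records_interleave_shift m k u v :
  all (fun x => x <= k) u -> all (fun x => 0 < x) v -> count id m = size v ->
  records 0 (interleave m u (map (addn k) v)) =
  merge_records m (records 0 u) (records 0 v).
Proof.
move=> u_le v_pos v_cnt; rewrite (records_interleave (k := k)) ?size_map ?all_shift_gt //.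
by rewrite -(records_shift k 0 v) addn0.
Qed.

Section Relabelling.

Variables (I : seq nat) (N : nat) (al be al' be' : seq nat).
Hypotheses (al_perm : is_permw al) (al'_perm : is_permw al').
Hypotheses (be_perm : is_permw be) (be'_perm : is_permw be').
Hypotheses (SC_al : SC al = SC al') (SC_be : SC be = SC be').

Let k := size al.
Let in_fiber u v s := (SC s == I) && split_at k s u v.
Let relabel s := interleave (high_mask k s) al' (map (addn k) be').

Let records_al : records 0 al = records 0 al'.
Proof. by rewrite !records_SC ?(perm_iota1_pos al_perm, perm_iota1_pos al'_perm) ?SC_al. Qed.

Let records_be : records 0 be = records 0 be'.
Proof. by rewrite !records_SC ?(perm_iota1_pos be_perm, perm_iota1_pos be'_perm) ?SC_be. Qed.

Let size_al' : size al' = k.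
Proof. by rewrite -sumn_SC -SC_al sumn_SC. Qed.

Let size_be' : size be' = size be.
Proof. by rewrite -sumn_SC -SC_be sumn_SC. Qed.

Lemma fiber_interleave s : split_at k s al be ->
  [/\ s = interleave (high_mask k s) al (map (addn k) be),
      count negb (high_mask k s) = k & count id (high_mask k s) = size be].
Proof.
move=> /andP[/eqP al_eq /eqP be_eq].
split; first by rewrite [X in interleave _ X]al_eq be_eq interleave_high_mask.
  have {2}-> : k = size [seq x <- s | x <= k] by rewrite -al_eq.
  by rewrite count_map size_filter; apply: eq_count => x /=; rewrite -leqNgt.
by rewrite count_map -(size_map (addn k)) be_eq size_filter.
Qed.

Lemma relabel_split s : split_at k s al be ->
  [/\ high_mask k (relabel s) = high_mask k s, perm_eq (relabel s) s
    & split_at k (relabel s) al' be'].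
Proof.
move=> /fiber_interleave[s_eq cnt_low cnt_high].
have al'_le : all (fun x => x <= k) al' by rewrite -size_al' permw_le_size.
have be'_gt := all_shift_gt k (perm_iota1_pos be'_perm).
have cnt_low' : count negb (high_mask k s) = size al' by rewrite size_al'.
have cnt_high' : count id (high_mask k s) = size (map (addn k) be').
  by rewrite size_map size_be'.
have [mask_eq low_eq high_eq] := interleave_split al'_le be'_gt cnt_low' cnt_high'.
split=> //; last by rewrite /split_at low_eq high_eq !eqxx.
have perm_s : perm_eq s (al ++ map (addn k) be).
  by rewrite {1}s_eq perm_interleave ?size_map.
rewrite (permPl (perm_interleave cnt_low' cnt_high')) (permPr perm_s).
by apply: perm_cat; [|apply: perm_map]; apply: permw_perm_eq.
Qed.

Lemma SC_relabel s : perm_eq s (iota 1 N) -> split_at k s al be -> SC (relabel s) = SC s.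
Proof.
move=> s_perm s_split; have [_ perm_rel _] := relabel_split s_split.
have [s_eq _ cnt_high] := fiber_interleave s_split.
apply: SC_eq_of_records; [exact: perm_iota1_pos (perm_trans perm_rel s_perm)
                         | exact: perm_iota1_pos s_perm |].
rewrite {2}s_eq !records_interleave_shift ?records_al ?records_be ?size_be' //.
- by rewrite -size_al' permw_le_size.
- exact: perm_iota1_pos be'_perm.
- exact: permw_le_size.
- exact: perm_iota1_pos be_perm.
Qed.

Lemma fiber_count_le :
  count (in_fiber al be) (permutations (iota 1 N)) <=
  count (in_fiber al' be') (permutations (iota 1 N)).
Proof.
apply: (@count_leq_inj_in _ _ _ _ relabel (permutations_uniq _)).
  move=> s1 s2; rewrite !mem_filter.
  move=> /andP[/andP[_ split1] _] /andP[/andP[_ split2] _] eq12.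
  have [mask1 _ _] := relabel_split split1; have [mask2 _ _] := relabel_split split2.
  have [-> _ _] := fiber_interleave split1; have [-> _ _] := fiber_interleave split2.
  by rewrite -mask1 -mask2 eq12.
move=> s; rewrite !mem_filter !mem_permutations => /andP[/andP[/eqP SC_s s_split] s_perm].
have [_ perm_rel rel_split] := relabel_split s_split.
by rewrite /in_fiber SC_relabel // SC_s eqxx rel_split (perm_trans perm_rel s_perm).
Qed.

End Relabelling.

Lemma DeltaC_coef_SC_invariant I al al' be be' :
  is_permw al -> is_permw al' -> is_permw be -> is_permw be' ->
  SC al = SC al' -> SC be = SC be' -> DeltaC_coef I al be = DeltaC_coef I al' be'.
Proof.
move=> al_perm al'_perm be_perm be'_perm SC_al SC_be.
have size_al : size al' = size al by rewrite -sumn_SC -SC_al sumn_SC.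
have fiberE u v : size u = size al -> DeltaC_coef I u v =
    count (fun s => (SC s == I) && split_at (size al) s u v) (permutations (iota 1 (sumn I))).
  move=> size_u; apply: eq_in_count => s; rewrite mem_permutations => s_perm /=.
  by rewrite cut_atE // size_u.
rewrite !fiberE //; apply/anti_leq/andP; split; first exact: fiber_count_le.
by rewrite -size_al; apply: fiber_count_le.
Qed.

Definition permws_upto (N : nat) : seq (seq nat) :=
  flatten [seq permutations (iota 1 n) | n <- iota 0 N.+1].

Lemma mem_permws_upto N w : (w \in permws_upto N) = is_permw w && (size w <= N).
Proof.
apply/flattenP/andP => [[_ /mapP[n n_in ->]]|[w_perm w_le]].
  rewrite mem_permutations => w_perm; rewrite /is_permw (perm_size w_perm) size_iota w_perm.
  by rewrite mem_iota in n_in.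
exists (permutations (iota 1 (size w))); last by rewrite mem_permutations.
by apply/mapP; exists (size w); rewrite // mem_iota.
Qed.

Lemma sum_Cc_pair (c : seq nat -> seq nat -> rat) (L : seq (seq nat * seq nat)) al be :
  uniq L ->
  (\sum_(p <- L) c p.1 p.2 * (Cc p.1 al * Cc p.2 be))%R =
  if [&& is_permw al, is_permw be & (SC al, SC be) \in L] then c (SC al) (SC be) else 0%R.
Proof.
move=> L_uniq.
have Cc_pair p : (Cc p.1 al * Cc p.2 be)%R =
                 ([&& is_permw al, is_permw be & p == (SC al, SC be)])%:R%R.
  case: p => J K; rewrite /Cc -natrM xpair_eqE /= (eq_sym J) (eq_sym K).
  by case: (is_permw al); case: (is_permw be); case: (SC al == J); case: (SC be == K).
rewrite (eq_bigr (fun p => c p.1 p.2 *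
  ([&& is_permw al, is_permw be & p == (SC al, SC be)])%:R))%R; last first.
  by move=> p _; rewrite Cc_pair.
case: (boolP (is_permw al && is_permw be)) => [/andP[-> ->]|not_perms] /=; last first.
  rewrite andbA (negbTE not_perms) big1 // => p _.
  by rewrite andbA (negbTE not_perms) mulr0.
case: ifP => [in_L|out_L].
  rewrite (bigD1_seq (SC al, SC be)) //= eqxx mulr1 big1 ?addr0 // => p.
  by move=> /negbTE ->; rewrite mulr0.
by rewrite big1_seq // => p /andP[_ p_in]; case: eqP p_in => [->|_]; rewrite ?out_L ?mulr0.
Qed.

Lemma SC_class_decomposition N (f : seq nat -> seq nat -> nat) :
  (forall al be, f al be != 0 ->
     [&& is_permw al, is_permw be, size al <= N & size be <= N]) ->
  (forall al al' be be', is_permw al -> is_permw al' -> is_permw be -> is_permw be' ->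
     SC al = SC al' -> SC be = SC be' -> f al be = f al' be') ->
  exists (L : seq (seq nat * seq nat)) (a : seq nat -> seq nat -> nat),
    [/\ uniq L, all (fun p => is_composition p.1 && is_composition p.2) L &
        forall al be, (f al be)%:R%R =
          (\sum_(p <- L) (a p.1 p.2)%:R * (Cc p.1 al * Cc p.2 be))%R].
Proof.
move=> f_support f_SC; set W := permws_upto N.
pose rep J := nth [::] W (find (fun w => SC w == J) W).
have rep_spec w : w \in W -> is_permw (rep (SC w)) /\ SC (rep (SC w)) = SC w.
  move=> w_in; have has_w : has (fun x => SC x == SC w) W by apply/hasP; exists w.
  have : rep (SC w) \in W by rewrite mem_nth // -has_find.
  by rewrite mem_permws_upto => /andP[rep_perm _]; split=> //; apply/eqP/(nth_find [::] has_w).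
exists (undup [seq (SC x, SC y) | x <- W, y <- W]), (fun J K => f (rep J) (rep K)).
split; first exact: undup_uniq.
  apply/allP => p; rewrite mem_undup => /allpairsP[[x y] [_ _ ->]].
  by rewrite /= !SC_composition.
move=> al be.
rewrite (sum_Cc_pair (fun J K => (f (rep J) (rep K))%:R%R)) ?undup_uniq // mem_undup.
case: ifP => [/and3P[al_perm be_perm /allpairsP[[x y] /= [x_in y_in [SC_x SC_y]]]] | not_in].
  have [rx_perm rx_SC] := rep_spec x x_in; have [ry_perm ry_SC] := rep_spec y y_in.
  by rewrite SC_x SC_y; congr (_%:R)%R; apply: f_SC; rewrite ?rx_SC ?ry_SC.
apply/eqP; rewrite pnatr_eq0; apply: contraFT not_in.
move=> /f_support/and4P[al_perm be_perm al_le be_le]; rewrite al_perm be_perm.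
by apply/allpairsP; exists (al, be); rewrite !mem_permws_upto al_perm be_perm al_le be_le.
Qed.

Theorem mainTheorem2 (I : seq nat) (hI : is_composition I) :
  exists (L : seq (seq nat * seq nat)) (a : seq nat -> seq nat -> nat),
    [/\ uniq L,
        all (fun p => is_composition p.1 && is_composition p.2) L &
        forall al be : seq nat,
          DeltaC I al be =
          (\sum_(p <- L) (a p.1 p.2)%:R * (Cc p.1 al * Cc p.2 be))%R].
Proof.
(* The decomposition holds for every [I]. *)
have [L [a [L_uniq L_comp DeltaC_coefE]]] :=
  SC_class_decomposition (@DeltaC_coef_support I) (@DeltaC_coef_SC_invariant I).
by exists L, a; split=> // al be; rewrite DeltaCE DeltaC_coefE.
Qed.
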